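(* Let $G=(V,E)$ be a $k$-uniform cored hypergraph ($k\ge3$) with Laplacian tensor $\mathcal L$. Then $\lambda=1$ is an H-eigenvalue of $\mathcal L$.
   Context: A $k$-uniform hypergraph $G=(V,E)$ has $V=[n]$ and a nonempty set $E$ of $k$-element subsets of $V$; $d_i$ is the number of edges containing $i$. $G$ is cored if every edge contains a vertex of degree one. The Laplacian tensor $\mathcal L=\mathcal D-\mathcal A$ ($\mathcal D$ diagonal with entries $d_i$, $\mathcal A$ with entries $\frac1{(k-1)!}$ at index tuples forming an edge and $0$ otherwise) satisfies $(\mathcal L\mathbf x^{k-1})_i=d_ix_i^{k-1}-\sum_{e\in E,\,i\in e}\prod_{s\in e\setminus\{i\}}x_s$. A real $\lambda$ is an H-eigenvalue if some nonzero $\mathbf x\in\mathbb R^n$ satisfies $(\mathcal L\mathbf x^{k-1})_i=\lambda x_i^{k-1}$ for all $i$. *)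

From HB Require Import structures.
From mathcomp Require Import all_boot all_order all_algebra.
From mathcomp Require Import reals.
Set Implicit Arguments. Unset Strict Implicit. Unset Printing Implicit Defensive.
Import Order.TTheory GRing.Theory Num.Theory.
Local Open Scope ring_scope.

Definition k_uniform_hypergraph (n k : nat) (E : {set {set 'I_n}}) : Prop :=
  E != set0 /\ (forall e, e \in E -> #|e| = k).

Definition hdeg (n : nat) (E : {set {set 'I_n}}) (i : 'I_n) : nat :=
  #|[set e in E | i \in e]|.

Definition cored (n : nat) (E : {set {set 'I_n}}) : Prop :=
  forall e, e \in E -> exists2 i, i \in e & hdeg E i = 1%N.

(* (L x^{k-1})_i = d_i x_i^{k-1} - sum_{e in E, i in e} prod_{s in e \ {i}} x_s *)
Definition laplacian_apply (R : realType) (n k : nat) (E : {set {set 'I_n}})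
    (x : 'I_n -> R) (i : 'I_n) : R :=
  (hdeg E i)%:R * x i ^+ k.-1
  - \sum_(e in E | i \in e) \prod_(s in e :\ i) x s.

Definition laplacian_H_eigenvalue (R : realType) (n k : nat)
    (E : {set {set 'I_n}}) (lambda : R) : Prop :=
  exists x : 'I_n -> R, (exists j, x j != 0) /\
    forall i, laplacian_apply k E x i = lambda * x i ^+ k.-1.

From HB Require Import structures.
From mathcomp Require Import all_boot all_order all_algebra.
From mathcomp Require Import reals.
Local Open Scope ring_scope.
Import GRing.Theory.

(* The eigenvector is the coordinate vector of a vertex [i] of degree one.
   Since every edge has at least three vertices, each product over
   [e \ {j}] in the Laplacian contains a vertex other than [i], hence a zero
   factor; the Laplacian thus reduces to [d_j x_j^(k-1)], which equals
   [x_j^(k-1)] because [x] is supported on the vertex [i] with [d_i = 1]. *)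

Definition basis_vec (R : comNzRingType) {n : nat} (i : 'I_n) : 'I_n -> R :=
  fun j => (j == i)%:R.

Lemma prod_basis_vec_eq0 (R : comNzRingType) (n : nat) (i : 'I_n) (A : {set 'I_n}) :
  (1 < #|A|)%N -> \prod_(s in A) basis_vec R i s = 0.
Proof.
move=> /card_gt1P [x [y [x_in_A y_in_A x_neq_y]]].
have [s s_in_A s_neq_i] : exists2 s, s \in A & s != i.
  have [x_eq_i | ] := eqVneq x i; last by exists x.
  by exists y; rewrite // -x_eq_i eq_sym.
by rewrite (bigD1 s) //= /basis_vec (negbTE s_neq_i) mul0r.
Qed.

Lemma laplacian_apply_basis_vec (R : realType) (n k : nat)
    (E : {set {set 'I_n}}) (i j : 'I_n) :
  (forall e, e \in E -> 2 < #|e|)%N ->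
  laplacian_apply k E (basis_vec R i) j = (hdeg E j)%:R * basis_vec R i j ^+ k.-1.
Proof.
move=> E_big; rewrite /laplacian_apply big1 ?subr0 // => e /andP [e_in_E j_in_e].
apply: prod_basis_vec_eq0.
by have := E_big e e_in_E; rewrite (cardsD1 j e) j_in_e add1n ltnS.
Qed.

Theorem proposition5p5 (R : realType) (n k : nat) (E : {set {set 'I_n}}) :
  (3 <= k)%N -> k_uniform_hypergraph k E -> cored E ->
  laplacian_H_eigenvalue k E (1 : R).
Proof.
move=> k_ge3 [/set0Pn [e0 e0_in_E] E_unif] E_cored.
have [i _ deg_i] := E_cored e0 e0_in_E.
exists (basis_vec R i); split; first by exists i; rewrite /basis_vec eqxx oner_neq0.
move=> j; rewrite mul1r laplacian_apply_basis_vec; last by move=> e /E_unif ->.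
rewrite /basis_vec; have [-> | _] := eqP; first by rewrite deg_i mul1r.
have k1_neq0 : k.-1 != 0%N by case: k k_ge3 {E_unif} => [|[|]].
by rewrite expr0n (negbTE k1_neq0) mulr0.
Qed.
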